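(* Let $\mathbb{U}$ be the Urysohn space and let $\mathbf{A},\mathbf{B}\subset\mathbb{U}$ be finite. Then for every $p\in\mathrm{Iso}_{\mathbf{A}\cap\mathbf{B}}(\mathbb{U})$ and every finite $\mathbf{C}\subseteq\mathbb{U}$ there is $q\in\langle\mathrm{Iso}_{\mathbf{A}}(\mathbb{U}),\mathrm{Iso}_{\mathbf{B}}(\mathbb{U})\rangle$ such that $q(x)=p(x)$ for all $x\in\mathbf{C}$.
   Context: The Urysohn space $\mathbb{U}$ is the unique (up to isometry) complete separable metric space into which every finite metric space embeds isometrically and in which every isometry between finite subsets extends to an isometry of $\mathbb{U}$. For $\mathbf{D}\subseteq\mathbb{U}$, $\mathrm{Iso}_{\mathbf{D}}(\mathbb{U})$ is the subgroup of isometries of $\mathbb{U}$ fixing $\mathbf{D}$ pointwise; $\langle X,Y\rangle$ is the subgroup generated by $X\cup Y$. *)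

From Stdlib Require Export Reals List.
Open Scope R_scope.

Section Urysohn.
Variable X : Type.
Variable d : X -> X -> R.

Definition is_metric : Prop :=
  (forall x y, 0 <= d x y) /\
  (forall x y, d x y = 0 <-> x = y) /\
  (forall x y, d x y = d y x) /\
  (forall x y z, d x z <= d x y + d y z).

Definition is_cauchy (u : nat -> X) : Prop :=
  forall eps, 0 < eps -> exists N, forall m n, (N <= m)%nat -> (N <= n)%nat -> d (u m) (u n) < eps.
Definition converges_to (u : nat -> X) (l : X) : Prop :=
  forall eps, 0 < eps -> exists N, forall n, (N <= n)%nat -> d (u n) l < eps.
Definition complete : Prop :=
  forall u, is_cauchy u -> exists l, converges_to u l.

Definition separable : Prop :=
  exists s : nat -> X, forall x eps, 0 < eps -> exists n, d x (s n) < eps.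

Definition finite_metric (n : nat) (f : nat -> nat -> R) : Prop :=
  (forall i j, (i < n)%nat -> (j < n)%nat -> 0 <= f i j) /\
  (forall i j, (i < n)%nat -> (j < n)%nat -> (f i j = 0 <-> i = j)) /\
  (forall i j, (i < n)%nat -> (j < n)%nat -> f i j = f j i) /\
  (forall i j k, (i < n)%nat -> (j < n)%nat -> (k < n)%nat -> f i k <= f i j + f j k).

Definition finitely_universal : Prop :=
  forall n f, finite_metric n f ->
    exists e : nat -> X, forall i j, (i < n)%nat -> (j < n)%nat -> d (e i) (e j) = f i j.

Definition is_isometry (g : X -> X) : Prop :=
  (forall x y, d (g x) (g y) = d x y) /\ (forall y, exists x, g x = y).

(** every isometry between finite subsets extends to an isometry of X.
    A finite partial isometry is given by two lists xs, ys of equal length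
    with xs_i |-> ys_i distance-preserving. *)
Definition finitely_homogeneous : Prop :=
  forall (xs ys : list X) (x0 : X), length xs = length ys ->
    (forall i j, (i < length xs)%nat -> (j < length xs)%nat ->
       d (nth i ys x0) (nth j ys x0) = d (nth i xs x0) (nth j xs x0)) ->
    exists g, is_isometry g /\
      forall i, (i < length xs)%nat -> g (nth i xs x0) = nth i ys x0.

Definition is_Urysohn : Prop :=
  is_metric /\ complete /\ separable /\ finitely_universal /\ finitely_homogeneous.

Definition Iso_fix (D : X -> Prop) (g : X -> X) : Prop :=
  is_isometry g /\ forall x, D x -> g x = x.

Inductive gen_group (S : (X -> X) -> Prop) : (X -> X) -> Prop :=
  | gen_id : gen_group S (fun x => x)
  | gen_base : forall g, S g -> gen_group S g
  | gen_comp : forall f g, gen_group S f -> gen_group S g -> gen_group S (fun x => f (g x))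
  | gen_inv : forall f g, gen_group S f ->
      (forall x, f (g x) = x) -> (forall x, g (f x) = x) -> gen_group S g.

End Urysohn.

From Stdlib Require Import Reals Lra Lia List ListSet FinFun Classical ClassicalEpsilon.
Open Scope R_scope.

(* Write [I] for [A ∩ B] and fix [c].  Any point [x] with the same distances as
   [c] to [I] can be moved by [Iso_A] and [Iso_B] so that its distances to [A]
   become those of the free amalgam [F u = min_(i in I) d c i + d i u]:
   alternately realise over [A] the free amalgam of [x] with [B], and over [B]
   the free amalgam with [A].  Each round raises the smallest distance to [A]
   that is still below [F] by the minimal distance [m > 0] between distinct
   points of [A] and [B], so finitely many rounds suffice.  Doing this for [c]
   and for [p c] joins the two points inside one orbit.  When [I] is empty,
   first adjoin to [A] and [B] a point [z] with [p z] in the orbit of [z].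
   Finally, the points of [C] are treated one at a time, each treated point
   being added to both [A] and [B]. *)

Definition min_on {T} (f : T -> R) (a0 : T) (L : list T) : R :=
  fold_right (fun a r => Rmin (f a) r) (f a0) L.

Lemma min_on_le {T} (f : T -> R) a0 L y : In y (a0 :: L) -> min_on f a0 L <= f y.
Proof.
  induction L as [|a L IH]; simpl.
  - intros [<-|[]]; lra.
  - intros [E|[<-|Hy]]; [| apply Rmin_l |];
      (eapply Rle_trans; [apply Rmin_r | apply IH; simpl; auto]).
Qed.

Lemma min_on_attained {T} (f : T -> R) a0 L :
  exists y, In y (a0 :: L) /\ min_on f a0 L = f y.
Proof.
  induction L as [|a L [y [Hy E]]]; simpl.
  - exists a0; auto.
  - unfold Rmin; fold (min_on f a0 L).
    destruct (Rle_dec (f a) (min_on f a0 L)).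
    + exists a; simpl; auto.
    + exists y; split; [destruct Hy; simpl; auto | exact E].
Qed.

Lemma list_upper_bound {T} (f : T -> R) (L : list T) :
  exists M, forall a, In a L -> f a <= M.
Proof.
  induction L as [|a L [M HM]].
  - exists 0; intros a [].
  - exists (Rmax (f a) M); intros b [<-|Hb]; [apply Rmax_l|].
    eapply Rle_trans; [apply HM, Hb | apply Rmax_r].
Qed.

Lemma list_lower_bound_pos {T} (f : T -> R) (L : list T) :
  (forall a, In a L -> 0 < f a) -> exists m, 0 < m /\ forall a, In a L -> m <= f a.
Proof.
  induction L as [|a L IH]; intros Hpos.
  - exists 1; split; [lra | intros a []].
  - destruct IH as [m [Hm HL]]; [intros b Hb; apply Hpos; simpl; auto|].
    exists (Rmin (f a) m); split; [apply Rmin_glb_lt; simpl in *; auto|].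
    intros b [<-|Hb]; [apply Rmin_l|].
    eapply Rle_trans; [apply Rmin_r | apply HL, Hb].
Qed.

Lemma nth_map_seq {T} (f : nat -> T) n i x0 :
  (i < n)%nat -> nth i (map f (seq 0 n)) x0 = f i.
Proof.
  intros Hi. rewrite nth_indep with (d' := f 0%nat) by (rewrite length_map, length_seq; auto).
  rewrite map_nth, seq_nth by exact Hi. reflexivity.
Qed.

Lemma nth_map_Some {T} (L : list T) i x0 :
  (i < length L)%nat -> nth i (map Some L) None = Some (nth i L x0).
Proof.
  intros Hi. rewrite nth_indep with (d' := Some x0) by (rewrite length_map; exact Hi).
  apply map_nth.
Qed.

Lemma finite_metric_nth {T} (e : T -> T -> R) (l : list T) (t0 : T) :
  NoDup l ->
  (forall x y, In x l -> In y l -> e x y = 0 <-> x = y) ->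
  (forall x y, In x l -> In y l -> e x y = e y x) ->
  (forall x y z, In x l -> In y l -> In z l -> e x z <= e x y + e y z) ->
  finite_metric (length l) (fun i j => e (nth i l t0) (nth j l t0)).
Proof.
  intros Hnd H0 Hsym Htri.
  assert (Hin : forall i, (i < length l)%nat -> In (nth i l t0) l) by (intros; apply nth_In; auto).
  split; [|split; [|split]]; intros i j.
  - intros Hi Hj.
    assert (Hii : e (nth i l t0) (nth i l t0) = 0) by (apply H0; auto).
    pose proof (Htri _ _ _ (Hin i Hi) (Hin j Hj) (Hin i Hi)).
    rewrite (Hsym (nth j l t0)) in H by auto. lra.
  - intros Hi Hj. rewrite H0 by auto. split; [|intros ->; reflexivity].
    apply NoDup_nth; auto.
  - intros Hi Hj. apply Hsym; auto.
  - intros k Hi Hj Hk. apply Htri; auto.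
Qed.

Section Metric.

Variable U : Type.
Variable d : U -> U -> R.
Hypothesis Hd : is_metric U d.

Lemma dist_ge0 x y : 0 <= d x y.
Proof. exact (proj1 Hd x y). Qed.

Lemma dist_eq0 x y : d x y = 0 <-> x = y.
Proof. exact (proj1 (proj2 Hd) x y). Qed.

Lemma dist_xx x : d x x = 0.
Proof. apply dist_eq0; reflexivity. Qed.

Lemma dist_sym x y : d x y = d y x.
Proof. exact (proj1 (proj2 (proj2 Hd)) x y). Qed.

Lemma dist_triangle x y z : d x z <= d x y + d y z.
Proof. exact (proj2 (proj2 (proj2 Hd)) x y z). Qed.

Lemma dist_gt0 x y : x <> y -> 0 < d x y.
Proof.
  intros Hxy. destruct (dist_ge0 x y) as [|E]; auto.
  exfalso; apply Hxy, dist_eq0; auto.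
Qed.

Lemma separation (A B : list U) :
  exists m, 0 < m /\ forall a b, In a A -> In b B -> a <> b -> m <= d a b.
Proof.
  pose (f ab := if excluded_middle_informative (fst ab = snd ab) then 1
                else d (fst ab) (snd ab)).
  destruct (list_lower_bound_pos f (list_prod A B)) as [m [Hm Hf]].
  - intros [a b] _; unfold f; simpl.
    destruct excluded_middle_informative; [lra | apply dist_gt0; auto].
  - exists m; split; auto. intros a b Ha Hb Hab.
    specialize (Hf (a, b) (in_prod _ _ _ _ Ha Hb)); unfold f in Hf; simpl in Hf.
    destruct excluded_middle_informative; [contradiction | exact Hf].
Qed.

(* Katětov functions on [L] are the distance profiles of a possible new point
   over [L]. *)
Definition katetov (L : list U) (phi : U -> R) : Prop :=
  forall u v, In u L -> In v L -> phi u <= phi v + d u v /\ d u v <= phi u + phi v.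

Lemma katetov_ge0 L phi u : katetov L phi -> In u L -> 0 <= phi u.
Proof. intros HK Hu. destruct (HK u u Hu Hu). rewrite dist_xx in *. lra. Qed.

Lemma katetov_sublist L L' phi :
  (forall u, In u L' -> In u L) -> katetov L phi -> katetov L' phi.
Proof. intros HL HK u v Hu Hv. apply HK; auto. Qed.

(* The largest Katětov function extending [d x] from [a0 :: L]. *)
Definition free_ext (x a0 : U) (L : list U) (u : U) : R :=
  min_on (fun a => d x a + d a u) a0 L.

Lemma free_ext_attained x a0 L u :
  exists a, In a (a0 :: L) /\ free_ext x a0 L u = d x a + d a u.
Proof. apply min_on_attained. Qed.

Lemma free_ext_le x a0 L u a : In a (a0 :: L) -> free_ext x a0 L u <= d x a + d a u.
Proof. apply (min_on_le (fun a => d x a + d a u)). Qed.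

Lemma free_ext_lip x a0 L u v : free_ext x a0 L u <= free_ext x a0 L v + d u v.
Proof.
  destruct (free_ext_attained x a0 L v) as [a [Ha ->]].
  pose proof (free_ext_le x a0 L u a Ha).
  pose proof (dist_triangle a v u); rewrite (dist_sym v u) in *; lra.
Qed.

Lemma free_ext_katetov x a0 L L' : katetov L' (free_ext x a0 L).
Proof.
  intros u v _ _; split; [apply free_ext_lip|].
  destruct (free_ext_attained x a0 L u) as [a [_ ->]].
  destruct (free_ext_attained x a0 L v) as [b [_ ->]].
  pose proof (dist_triangle u a v); pose proof (dist_triangle a x v);
  pose proof (dist_triangle x b v).
  rewrite (dist_sym u a), (dist_sym a x) in *; lra.
Qed.

Lemma free_ext_max x y a0 L u :
  (forall i, In i (a0 :: L) -> d y i = d x i) -> d y u <= free_ext x a0 L u.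
Proof.
  intros Hxy. destruct (free_ext_attained x a0 L u) as [a [Ha ->]].
  rewrite <- (Hxy a Ha). apply dist_triangle.
Qed.

Lemma free_ext_on x a0 L a : In a (a0 :: L) -> free_ext x a0 L a = d x a.
Proof.
  intros Ha. apply Rle_antisym.
  - pose proof (free_ext_le x a0 L a a Ha); rewrite dist_xx in *; lra.
  - apply free_ext_max; auto.
Qed.

Lemma isometry_inverse g : is_isometry U d g ->
  exists gi, is_isometry U d gi /\ (forall x, g (gi x) = x) /\ (forall x, gi (g x) = x).
Proof.
  intros [Hg Hsurj].
  destruct (choice (fun y x => g x = y) Hsurj) as [gi Hggi].
  assert (Hgig : forall x, gi (g x) = x).
  { intros x. apply dist_eq0. rewrite <- Hg, Hggi. apply dist_xx. }
  exists gi; repeat split; auto.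
  - intros x y. rewrite <- Hg, !Hggi. reflexivity.
  - intros y. exists (g y). auto.
Qed.

Lemma Iso_fix_antitone (D D' : U -> Prop) g :
  (forall x, D x -> D' x) -> Iso_fix U d D' g -> Iso_fix U d D g.
Proof. intros HD [Hg Hfix]; split; auto. Qed.

Section Generated.

Variable S : (U -> U) -> Prop.

Lemma gen_group_mono (S' : (U -> U) -> Prop) g :
  (forall f, S f -> S' f) -> gen_group U S g -> gen_group U S' g.
Proof.
  intros HS. induction 1.
  - apply gen_id.
  - apply gen_base; auto.
  - apply gen_comp; auto.
  - eapply gen_inv; eauto.
Qed.

Lemma gen_group_fix x g :
  (forall f, S f -> f x = x) -> gen_group U S g -> g x = x.
Proof.
  intros HS. induction 1 as [|g Hg|f g _ IHf _ IHg|f g _ IHf _ Hgf]; auto.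
  - rewrite IHg; auto.
  - rewrite <- IHf at 1. apply Hgf.
Qed.

Lemma gen_group_isometry g :
  (forall f, S f -> is_isometry U d f) -> gen_group U S g -> is_isometry U d g.
Proof.
  intros HS. induction 1 as [|g Hg|f g _ [Hf Hfs] _ [Hg Hgs]|f g _ [Hf _] Hfg Hgf].
  - split; [reflexivity | intros y; exists y; reflexivity].
  - auto.
  - split; [intros; rewrite Hf; auto|].
    intros y. destruct (Hfs y) as [x <-]. destruct (Hgs x) as [z <-]. eauto.
  - split; [intros x y; rewrite <- Hf, !Hfg; reflexivity | intros y; exists (f y); apply Hgf].
Qed.

Lemma gen_group_inverse g :
  (forall f, S f -> is_isometry U d f) -> gen_group U S g ->
  exists gi, gen_group U S gi /\ (forall x, g (gi x) = x) /\ (forall x, gi (g x) = x).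
Proof.
  intros HS Hg.
  destruct (isometry_inverse g (gen_group_isometry g HS Hg)) as [gi [_ [H1 H2]]].
  exists gi; split; auto. eapply gen_inv; eauto.
Qed.

Definition orbit_rel (x y : U) : Prop := exists g, gen_group U S g /\ g x = y.

Lemma orbit_rel_refl x : orbit_rel x x.
Proof. exists (fun x => x); split; [apply gen_id | reflexivity]. Qed.

Lemma orbit_rel_trans x y z : orbit_rel x y -> orbit_rel y z -> orbit_rel x z.
Proof.
  intros [f [Hf <-]] [g [Hg <-]].
  exists (fun u => g (f u)); split; [apply gen_comp | reflexivity]; auto.
Qed.

Lemma orbit_rel_sym x y :
  (forall f, S f -> is_isometry U d f) -> orbit_rel x y -> orbit_rel y x.
Proof.
  intros HS [g [Hg <-]].
  destruct (gen_group_inverse g HS Hg) as [gi [Hgi [_ H]]]. exists gi; auto.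
Qed.

End Generated.

Definition iso_AB (A B : list U) (g : U -> U) : Prop :=
  Iso_fix U d (fun x => In x A) g \/ Iso_fix U d (fun x => In x B) g.

Lemma iso_AB_isometry A B g : iso_AB A B g -> is_isometry U d g.
Proof. intros [[H _]|[H _]]; exact H. Qed.

Lemma iso_AB_fix A B x g : In x A -> In x B -> iso_AB A B g -> g x = x.
Proof. intros HA HB [[_ H]|[_ H]]; auto. Qed.

Lemma iso_AB_cons A B c g : iso_AB (c :: A) (c :: B) g -> iso_AB A B g.
Proof.
  intros [H|H]; [left|right]; revert H;
    apply Iso_fix_antitone; intros x Hx; right; exact Hx.
Qed.

Lemma gen_iso_AB_cons A B c g :
  gen_group U (iso_AB (c :: A) (c :: B)) g -> gen_group U (iso_AB A B) g.
Proof. apply gen_group_mono, iso_AB_cons. Qed.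

Lemma gen_iso_AB_fix A B x g :
  In x A -> In x B -> gen_group U (iso_AB A B) g -> g x = x.
Proof. intros HA HB. apply gen_group_fix. intros f; apply iso_AB_fix; auto. Qed.

Lemma orbit_rel_cons A B c x y :
  orbit_rel (iso_AB (c :: A) (c :: B)) x y -> orbit_rel (iso_AB A B) x y.
Proof. intros [g [Hg E]]. exists g; split; [apply (gen_iso_AB_cons _ _ c) |]; auto. Qed.

Lemma iso_fix_peel A B p c g :
  Iso_fix U d (fun x => In x A /\ In x B) p ->
  gen_group U (iso_AB A B) g -> g c = p c ->
  exists p', Iso_fix U d (fun x => In x (c :: A) /\ In x (c :: B)) p' /\
             forall x, g (p' x) = p x.
Proof.
  intros [[Hpd Hps] Hpf] Hg Hgc.
  destruct (gen_group_inverse _ g (iso_AB_isometry A B) Hg) as [gi [Hgi [Hggi Hgig]]].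
  destruct (gen_group_isometry _ gi (iso_AB_isometry A B) Hgi) as [Hgid _].
  exists (fun x => gi (p x)); split; [|intros x; apply Hggi].
  split; [split|].
  - intros x y. rewrite Hgid. apply Hpd.
  - intros y. destruct (Hps (g y)) as [x Hx]. exists x. rewrite Hx. apply Hgig.
  - intros x [[Ex|HxA] [Ex'|HxB]]; try (subst x; rewrite <- Hgc; apply Hgig).
    rewrite Hpf by auto. apply (gen_iso_AB_fix A B); auto.
Qed.

Section Urysohn.

Hypothesis Huniv : finitely_universal U d.
Hypothesis Hhom : finitely_homogeneous U d.

(* [None] is a new point at distance [phi u] from each [Some u]. *)
Definition dist_opt (phi : U -> R) (x y : option U) : R :=
  match x, y with
  | Some u, Some v => d u v
  | Some u, None | None, Some u => phi u
  | None, None => 0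
  end.

Definition opt_in (L : list U) (x : option U) : Prop :=
  match x with Some u => In u L | None => True end.

Lemma opt_in_cons_map L x : In x (None :: map Some L) -> opt_in L x.
Proof.
  destruct x as [u|]; simpl; auto.
  intros [E|Hu]; [discriminate|].
  apply in_map_iff in Hu as [v [[= ->] Hv]]; exact Hv.
Qed.

Lemma dist_opt_eq0 L phi x y :
  (forall u, In u L -> 0 < phi u) -> opt_in L x -> opt_in L y ->
  dist_opt phi x y = 0 <-> x = y.
Proof.
  intros Hpos. destruct x as [u|], y as [v|]; simpl; intros Hx Hy.
  - rewrite dist_eq0. split; congruence.
  - pose proof (Hpos u Hx); split; [lra | discriminate].
  - pose proof (Hpos v Hy); split; [lra | discriminate].
  - tauto.
Qed.

Lemma dist_opt_sym phi x y : dist_opt phi x y = dist_opt phi y x.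
Proof. destruct x, y; simpl; auto using dist_sym. Qed.

Lemma dist_opt_triangle L phi x y z :
  katetov L phi -> opt_in L x -> opt_in L y -> opt_in L z ->
  dist_opt phi x z <= dist_opt phi x y + dist_opt phi y z.
Proof.
  intros HK. destruct x as [x|], y as [y|], z as [z|]; simpl; intros Hx Hy Hz.
  - apply dist_triangle.
  - destruct (HK x y Hx Hy); lra.
  - apply (HK x z Hx Hz).
  - lra.
  - destruct (HK z y Hz Hy); rewrite (dist_sym y z); lra.
  - pose proof (katetov_ge0 L phi y HK Hy); lra.
  - lra.
  - lra.
Qed.

Lemma katetov_realized L phi :
  katetov L phi -> exists y, forall u, In u L -> d y u = phi u.
Proof.
  intros HK.
  destruct (classic (exists u0, In u0 L /\ phi u0 = 0)) as [[u0 [Hu0 H0]]|Hpos].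
  { exists u0. intros u Hu. destruct (HK u0 u Hu0 Hu), (HK u u0 Hu Hu0).
    rewrite (dist_sym u u0) in *. lra. }
  set (K := nodup (fun x y => excluded_middle_informative (x = y)) L).
  assert (HKL : forall u, In u K <-> In u L) by apply nodup_In.
  assert (HKK : katetov K phi) by (apply (katetov_sublist L); [apply HKL | exact HK]).
  assert (Hphi : forall u, In u K -> 0 < phi u).
  { intros u Hu. apply HKL in Hu. destruct (katetov_ge0 L phi u HK Hu) as [|E]; auto.
    exfalso; apply Hpos; eauto. }
  set (l := None :: map Some K).
  assert (Hl : length l = S (length K)) by (simpl; rewrite length_map; reflexivity).
  destruct (Huniv (length l) (fun i j => dist_opt phi (nth i l None) (nth j l None)))
    as [e He].
  { apply finite_metric_nth.
    - constructor; [intros Hn; apply in_map_iff in Hn as [? [? _]]; discriminate|].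
      apply Injective_map_NoDup; [intros u v [= ->]; reflexivity | apply NoDup_nodup].
    - intros x y Hx Hy. apply (dist_opt_eq0 K); auto using opt_in_cons_map.
    - intros; apply dist_opt_sym.
    - intros x y z Hx Hy Hz. apply (dist_opt_triangle K); auto using opt_in_cons_map. }
  destruct (Hhom (map (fun i => e (S i)) (seq 0 (length K))) K (e 0%nat))
    as [g [[Hgd _] Hg]]; rewrite ?length_map, ?length_seq in *.
  - reflexivity.
  - intros i j Hi Hj. rewrite !nth_map_seq, He by (auto; rewrite Hl; lia). simpl.
    rewrite (nth_map_Some K i (e 0%nat)), (nth_map_Some K j (e 0%nat)) by assumption.
    reflexivity.
  - exists (g (e 0%nat)). intros u Hu. apply HKL in Hu.
    destruct (In_nth K u (e 0%nat) Hu) as [k [Hk <-]].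
    specialize (Hg k Hk). rewrite nth_map_seq in Hg by exact Hk.
    rewrite <- Hg at 1. rewrite Hgd, He by (rewrite Hl; lia). simpl.
    rewrite (nth_map_Some K k (e 0%nat)) by exact Hk. reflexivity.
Qed.

Lemma homogeneous_move L x y :
  (forall u, In u L -> d x u = d y u) ->
  exists g, Iso_fix U d (fun u => In u L) g /\ g x = y.
Proof.
  intros Hxy.
  destruct (Hhom (x :: L) (y :: L) x) as [g [Hg Hgxy]]; [reflexivity | |].
  - intros [|i] [|j] Hi Hj; simpl in *.
    + rewrite !dist_xx; reflexivity.
    + symmetry; apply Hxy, nth_In; lia.
    + rewrite (dist_sym _ y), (dist_sym _ x). symmetry; apply Hxy, nth_In; lia.
    + reflexivity.
  - exists g; split; [split; [exact Hg|] | apply (Hgxy 0%nat); simpl; lia].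
    intros u Hu. destruct (In_nth L u x Hu) as [k [Hk <-]].
    apply (Hgxy (S k)); simpl; lia.
Qed.

Lemma orbit_move_A A B x y :
  (forall a, In a A -> d x a = d y a) -> orbit_rel (iso_AB A B) x y.
Proof.
  intros Hxy. destruct (homogeneous_move A x y Hxy) as [g [Hg E]].
  exists g; split; [apply gen_base; left; exact Hg | exact E].
Qed.

Lemma orbit_move_B A B x y :
  (forall b, In b B -> d x b = d y b) -> orbit_rel (iso_AB A B) x y.
Proof.
  intros Hxy. destruct (homogeneous_move B x y Hxy) as [g [Hg E]].
  exists g; split; [apply gen_base; right; exact Hg | exact E].
Qed.

Section Amalgam.

Variables (A B : list U) (i0 c : U).
Hypotheses (HA0 : In i0 A) (HB0 : In i0 B).
Variable m : R.
Hypothesis Hsep : forall a b, In a A -> In b B -> a <> b -> m <= d a b.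

Let common := set_inter (fun x y => excluded_middle_informative (x = y)) A B.
Let F := free_ext c i0 common.
Let agrees x := forall i, In i A -> In i B -> d x i = d c i.

Lemma In_common i : In i (i0 :: common) <-> In i A /\ In i B.
Proof.
  simpl. unfold common. rewrite set_inter_iff.
  split; [intros [<-|H]; auto | intros H; right; exact H].
Qed.

Lemma F_on_common i : In i A -> In i B -> F i = d c i.
Proof. intros HA HB. apply free_ext_on, In_common; auto. Qed.

Lemma F_max x u : agrees x -> d x u <= F u.
Proof. intros Hx. apply free_ext_max. intros i Hi%In_common. apply Hx; tauto. Qed.

(* One round: realise over [A] the free amalgam of [x] with [B], then over [B]
   the free amalgam with [A].  A deficit at [a] after the round traces back,
   through a point of [B \ A], to a deficit before it that is smaller by at
   least [m]. *)
Lemma amalgam_step x : agrees x ->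
  exists x', orbit_rel (iso_AB A B) x x' /\ agrees x' /\
    forall a, In a A -> d x' a < F a ->
      exists a', In a' A /\ d x a' < F a' /\ d x a' + m <= d x' a.
Proof.
  intros Hx.
  destruct (katetov_realized (A ++ B) (free_ext x i0 A)) as [x1 Hx1];
    [apply free_ext_katetov|].
  assert (Hx1A : forall a, In a A -> d x1 a = d x a).
  { intros a Ha. rewrite Hx1 by (apply in_or_app; auto). apply free_ext_on; simpl; auto. }
  assert (Hx1c : agrees x1) by (intros i HiA HiB; rewrite Hx1A; auto).
  destruct (katetov_realized (A ++ B) (free_ext x1 i0 B)) as [x2 Hx2];
    [apply free_ext_katetov|].
  assert (Hx2B : forall b, In b B -> d x2 b = d x1 b).
  { intros b Hb. rewrite Hx2 by (apply in_or_app; auto). apply free_ext_on; simpl; auto. }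
  exists x2; split; [|split].
  - apply orbit_rel_trans with x1; [apply orbit_move_A | apply orbit_move_B];
      intros; symmetry; auto.
  - intros i HiA HiB. rewrite Hx2B; auto.
  - intros a Ha Hdef. rewrite Hx2 in Hdef |- * by (apply in_or_app; auto).
    destruct (free_ext_attained x1 i0 B a) as [b [Hb Eb]]. rewrite Eb in Hdef |- *.
    assert (HbB : In b B) by (destruct Hb as [<-|]; auto).
    assert (Hlip : F a <= F b + d b a) by (rewrite dist_sym; apply free_ext_lip).
    assert (Hdefb : d x1 b < F b) by lra.
    assert (HbA : ~ In b A).
    { intros HbA. rewrite F_on_common, Hx1c in Hdefb by auto. lra. }
    rewrite Hx1 in Hdefb |- * by (apply in_or_app; auto).
    destruct (free_ext_attained x i0 A b) as [a' [Ha' Ea']]. rewrite Ea' in Hdefb |- *.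
    assert (Ha'A : In a' A) by (destruct Ha' as [<-|]; auto).
    assert (Hlip' : F b <= F a' + d a' b) by (rewrite dist_sym; apply free_ext_lip).
    assert (Hne : a' <> b) by (intros ->; contradiction).
    pose proof (Hsep a' b Ha'A HbB Hne).
    pose proof (dist_ge0 b a).
    exists a'; split; [exact Ha'A | split]; lra.
Qed.

(* [M - N m] bounds the deficient distances from below; it is non-positive at
   the start and an upper bound of [F] once [N = 0]. *)
Lemma amalgam_iterate M N x :
  (forall a, In a A -> F a <= M) -> agrees x ->
  (forall a, In a A -> d x a < F a -> M - INR N * m <= d x a) ->
  exists y, orbit_rel (iso_AB A B) x y /\ forall a, In a A -> d y a = F a.
Proof.
  intros HM. revert x. induction N as [|N IH]; intros x Hx Hdef.
  - exists x; split; [apply orbit_rel_refl|]. intros a Ha.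
    apply Rle_antisym; [apply F_max; exact Hx|].
    apply Rnot_lt_le. intros Hlt. specialize (Hdef a Ha Hlt). specialize (HM a Ha).
    simpl in Hdef. lra.
  - destruct (amalgam_step x Hx) as [x' [Hxx' [Hx' Hdef']]].
    destruct (IH x' Hx') as [y [Hx'y Hy]].
    + intros a Ha Hlt. destruct (Hdef' a Ha Hlt) as [a' [Ha' [Hlt' Hle]]].
      specialize (Hdef a' Ha' Hlt'). rewrite S_INR in Hdef. lra.
    + exists y; split; [apply orbit_rel_trans with x' | ]; auto.
Qed.

End Amalgam.

Lemma orbit_iso_fix_common A B i0 p c : In i0 A -> In i0 B ->
  Iso_fix U d (fun x => In x A /\ In x B) p -> orbit_rel (iso_AB A B) c (p c).
Proof.
  intros HA0 HB0 [[Hpd _] Hpf].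
  set (F := free_ext c i0 (set_inter (fun x y => excluded_middle_informative (x = y)) A B)).
  destruct (separation A B) as [m [Hm Hsep]].
  destruct (list_upper_bound F A) as [M HM].
  destruct (INR_archimed m M Hm) as [N HN].
  assert (Hrun : forall x, (forall i, In i A -> In i B -> d x i = d c i) ->
            exists y, orbit_rel (iso_AB A B) x y /\ forall a, In a A -> d y a = F a).
  { intros x Hx. apply (amalgam_iterate A B i0 c HA0 HB0 m Hsep M N); auto.
    intros a _ _. pose proof (dist_ge0 x a). lra. }
  destruct (Hrun c) as [y [Hcy Hy]]; [intros; reflexivity|].
  destruct (Hrun (p c)) as [y' [Hpy Hy']].
  { intros i HiA HiB. rewrite <- (Hpf i (conj HiA HiB)) at 1. apply Hpd. }
  apply orbit_rel_trans with y; [exact Hcy|].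
  apply orbit_rel_trans with y'; [apply orbit_move_A; intros; rewrite Hy, Hy'; auto|].
  apply orbit_rel_sym; [apply iso_AB_isometry | exact Hpy].
Qed.

Lemma equidistant_point (o : U) (L : list U) : exists z K, forall u, In u L -> d z u = K.
Proof.
  destruct (list_upper_bound (d o) L) as [M HM].
  destruct (katetov_realized L (fun _ => Rmax M 0)) as [z Hz].
  - intros u v Hu Hv.
    pose proof (dist_ge0 u v); pose proof (dist_triangle u o v).
    pose proof (HM u Hu); pose proof (HM v Hv); pose proof (Rmax_l M 0).
    rewrite (dist_sym u o) in *. split; lra.
  - exists z, (Rmax M 0); exact Hz.
Qed.

(* A point [z] equidistant from [A ∪ B ∪ p^-1(A ∪ B)] has [p z] in its
   [Iso_(A ∪ B)]-orbit; peeling off that move leaves an isometry fixing [z],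
   which serves as a common point of the two enlarged sets. *)
Lemma orbit_iso_fix A B p c :
  Iso_fix U d (fun x => In x A /\ In x B) p -> orbit_rel (iso_AB A B) c (p c).
Proof.
  intros Hp. pose proof Hp as [[Hpd Hps] _].
  destruct (isometry_inverse p (conj Hpd Hps)) as [pi [_ [Hppi _]]].
  destruct (equidistant_point c (A ++ B ++ map pi (A ++ B))) as [z [K Hz]].
  assert (Hpz : forall u, In u (A ++ B) -> d z u = d (p z) u).
  { intros u Hu. rewrite <- (Hppi u) at 2. rewrite Hpd, !Hz; auto.
    all: rewrite app_assoc; apply in_or_app; auto using in_map. }
  destruct (homogeneous_move (A ++ B) z (p z) Hpz) as [h [Hh Hhz]].
  assert (Hhg : gen_group U (iso_AB A B) h).
  { apply gen_base; left. revert Hh; apply Iso_fix_antitone; auto using in_or_app. }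
  destruct (iso_fix_peel A B p z h Hp Hhg Hhz) as [p' [Hp' Hhp']].
  rewrite <- Hhp'.
  apply orbit_rel_trans with (p' c).
  - apply (orbit_rel_cons A B z), (orbit_iso_fix_common _ _ z); simpl; auto.
  - exists h; auto.
Qed.

End Urysohn.

End Metric.

Theorem theorem4p16 (U : Type) (d : U -> U -> R) (HU : is_Urysohn U d)
  (A B : list U) :
  forall p : U -> U,
    Iso_fix U d (fun x => In x A /\ In x B) p ->
    forall C : list U,
      exists q : U -> U,
        gen_group U (fun g => Iso_fix U d (fun x => In x A) g \/
                              Iso_fix U d (fun x => In x B) g) q /\
        (forall x, In x C -> q x = p x).
Proof.
  destruct HU as [Hd [_ [_ [Huniv Hhom]]]].
  intros p Hp C. revert A B p Hp.
  induction C as [|c C IH]; intros A B p Hp.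
  - exists (fun x => x). split; [apply gen_id | intros x []].
  - destruct (orbit_iso_fix U d Hd Huniv Hhom A B p c Hp) as [g [Hg Hgc]].
    destruct (iso_fix_peel U d Hd A B p c g Hp Hg Hgc) as [p' [Hp' Hgp']].
    destruct (IH (c :: A) (c :: B) p' Hp') as [q [Hq Hqp]].
    exists (fun x => g (q x)). split.
    + apply gen_comp; [exact Hg | exact (gen_iso_AB_cons U d A B c q Hq)].
    + intros x [<-|Hx].
      * rewrite (gen_iso_AB_fix U d (c :: A) (c :: B) c q); simpl; auto.
      * rewrite Hqp; auto.
Qed.
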